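(* Let $X_c$ be a Banach space, $A_c\in\mathcal L(X_c,X_c)$ invertible, and let $L_g\ge0$, $0\le L_c<1$, with $L_r,L_t,L_{-1}$ defined below, and assume $L_r<\|A_c^{-1}\|^{-1}$. Let $r,\tilde r\in C^2_b(X_c,X_c)$ with $\|Dr\|_0\le L_r$ and $\|D\tilde r\|_0\le L_r$. Let $X,Y$ be Banach spaces, $h\in C^2_b(Y,X)$ and $f_1,f_2\in C^2_b(X_c,Y)$. Then: (i) $\|h\circ f_1\circ(A_c+r)^{-1}-h\circ f_2\circ(A_c+\tilde r)^{-1}\|_0\le\|Dh\|_0\big(\|f_1-f_2\|_0+L_{-1}\|Df_2\|_0\|r-\tilde r\|_0\big)$. (ii) If moreover $\|D^2\tilde r\|_0\le\delta$ for some $\delta>0$, then $\|D[h\circ f_1\circ(A_c+r)^{-1}]-D[h\circ f_2\circ(A_c+\tilde r)^{-1}]\|_0\le L_{-1}\big(\|Dh\|_0+\|D^2h\|_0\|Df_2\|_0\big)\|f_1-f_2\|_1+L_{-1}^2\big(\|D^2h\|_0\|Df_2\|_0^2+\|Dh\|_0\|D^2f_2\|_0\big)\|r-\tilde r\|_1+L_{-1}^2\|Dh\|_0\|Df_1\|_0(1+L_{-1}\delta)\|r-\tilde r\|_1$.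
   Context: $\mathcal L(Y,Z)$ denotes bounded linear operators with operator norm. $C^k_b(Y,Z)$ is the Banach space of $C^k$ maps $f:Y\to Z$ with $\|f\|_k:=\max_{0\le j\le k}\sup_y\|D^jf(y)\|<\infty$. Constants: $L_r:=\frac{L_g+L_c(2\|A_c\|+L_g)}{1-L_c}$, $L_t:=\frac{\|A_c^{-1}\|^2L_r}{1-\|A_c^{-1}\|L_r}$, $L_{-1}:=\|A_c^{-1}\|+L_t$. (Under these hypotheses $A_c+r$ and $A_c+\tilde r$ are global diffeomorphisms of $X_c$.) *)

From HB Require Import structures.
From mathcomp Require Import all_boot all_order all_algebra.
From mathcomp Require Import all_classical all_reals all_analysis.
Set Implicit Arguments. Unset Strict Implicit. Unset Printing Implicit Defensive.
Import Order.TTheory GRing.Theory Num.Theory.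
Import numFieldNormedType.Exports.
Local Open Scope classical_set_scope.
Local Open Scope ring_scope.

Section Defs.
Context {R : realType}.

Definition supn {T : Type} {V : normedModType R} (f : T -> V) : R :=
  sup (range (fun x => `|f x|)).

Definition opn {U V : normedModType R} (L : U -> V) : R :=
  sup [set `|L u| | u in [set u : U | `|u| <= 1]].

Definition opn2 {U V : normedModType R} (B : U -> U -> V) : R :=
  sup [set `|B hu.1 hu.2| | hu in [set hu : U * U | `|hu.1| <= 1 /\ `|hu.2| <= 1]].

Definition D1 {U V : normedModType R} (f : U -> V) (x : U) : U -> V :=
  fun u => 'd f x u.

Definition D2 {U V : normedModType R} (f : U -> V) (x : U) : U -> U -> V :=
  fun h u => 'd (fun y => 'd f y u) x h.

Definition nD {U V : normedModType R} (f : U -> V) : R :=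
  sup (range (fun x => opn (D1 f x))).
Definition nD2 {U V : normedModType R} (f : U -> V) : R :=
  sup (range (fun x => opn2 (D2 f x))).

Definition n1 {U V : normedModType R} (f : U -> V) : R :=
  Num.max (supn f) (nD f).

(* f is in C^2_b(U,V): twice (Frechet) continuously differentiable with
   f, Df, D^2 f bounded *)
Definition C2b {U V : normedModType R} (f : U -> V) : Prop :=
  [/\ (forall x, differentiable f x),
      (forall x (e : R), 0 < e ->
         \forall y \near x, opn (fun u => D1 f y u - D1 f x u) <= e),
      (forall x, exists B : U -> U -> V,
         [/\ (forall a k1 k2 u, B (a *: k1 + k2) u = a *: B k1 u + B k2 u),
             (forall a k u1 u2, B k (a *: u1 + u2) = a *: B k u1 + B k u2),
             (exists M : R, forall k u, `|B k u| <= M * `|k| * `|u|) &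
             (forall e : R, 0 < e -> \forall k \near (0 : U),
                opn (fun u => D1 f (x + k) u - D1 f x u - B k u) <= e * `|k|)]),
      (forall x (e : R), 0 < e ->
         \forall y \near x, opn2 (fun h u => D2 f y h u - D2 f x h u) <= e) &
      [/\ has_ubound (range (fun x => `|f x|)),
          has_ubound (range (fun x => opn (D1 f x))) &
          has_ubound (range (fun x => opn2 (D2 f x)))]].

End Defs.

(* Write L_{-1} = a / (1 - a L_r) with a = ||A_c^{-1}||; this equals a + L_t.
   Every estimate on g = (A_c + r)^{-1} comes from one absorption step:
   P <= a (Q + L_r P) implies P <= L_{-1} Q.  Since
   A_c (g x - g x') = (x - x') - (r (g x) - r (g x')), this makes g
   L_{-1}-Lipschitz; the same computation for g_1 x - g_2 x bounds
   ||g_1 - g_2||_0 by L_{-1} ||r - r~||_0; applied to A_c + Dr(y), together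
   with Banach's fixed point theorem for surjectivity, it shows that
   A_c + Dr(g x) has an inverse of norm <= L_{-1}, which is Dg(x).  Estimate
   (i) then follows from the mean value inequality, and estimate (ii) from the
   chain rule by telescoping D(h o f_1 o g_1) - D(h o f_2 o g_2) through four
   intermediate terms, with Dg_1 - Dg_2 = Dg_2 (Dr~(g_2 x) - Dr(g_1 x)) Dg_1. *)

From HB Require Import structures.
From mathcomp Require Import all_boot all_order all_algebra.
From mathcomp Require Import all_classical all_reals all_analysis.
From mathcomp Require Import ring lra.
Import Order.TTheory GRing.Theory Num.Theory.
Import numFieldNormedType.Exports.
Local Open Scope classical_set_scope.
Local Open Scope ring_scope.

Section LinearOf.
Context {R : realType} {U V : normedModType R} (f : U -> V) (f_lin : linear f).
Definition linear_of_fun := f.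
HB.instance Definition _ := GRing.isLinear.Build R U V *:%R linear_of_fun f_lin.
Definition linear_of : {linear U -> V} := linear_of_fun.
End LinearOf.

Section OperatorNorm.
Context {R : realType}.

Definition bounded_by {U V : normedModType R} (L : U -> V) (K : R) :=
  forall u, `|L u| <= K * `|u|.
Definition bounded_by2 {U V : normedModType R} (B : U -> U -> V) (K : R) :=
  forall h u, `|B h u| <= K * `|h| * `|u|.

Lemma sup_ge0 (E : set R) : E !=set0 -> (forall x, E x -> 0 <= x) -> 0 <= sup E.
Proof.
move=> [x Ex] E_ge0; have [ubE|nubE] := pselect (has_ubound E).
  by apply: le_trans (E_ge0 x Ex) _; apply: ub_le_sup.
by rewrite sup_out // => -[].
Qed.

Lemma opn_ge0 {U V : normedModType R} (L : U -> V) : 0 <= opn L.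
Proof.
apply: sup_ge0; first by exists `|L 0|, 0 => //=; rewrite normr0.
by move=> _ [u _ <-].
Qed.

Lemma opn_le {U V : normedModType R} (L : U -> V) K :
  0 <= K -> bounded_by L K -> opn L <= K.
Proof.
move=> K_ge0 LK; apply: ge_sup; first by exists `|L 0|, 0 => //=; rewrite normr0.
move=> _ [u /= u_le1 <-]; apply: le_trans (LK u) _.
by rewrite -[leRHS]mulr1 ler_wpM2l.
Qed.

Lemma opn2_ge0 {U V : normedModType R} (B : U -> U -> V) : 0 <= opn2 B.
Proof.
apply: sup_ge0; first by exists `|B 0 0|, (0, 0) => //=; rewrite normr0.
by move=> _ [u _ <-].
Qed.

Lemma normalize_le1 {U : normedModType R} (u : U) : `|(`|u|^-1 *: u)| <= 1.
Proof.
have [->|u0] := eqVneq u 0; first by rewrite scaler0 normr0.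
by rewrite normrZ normfV normr_id mulVf ?normr_eq0.
Qed.

Lemma opn_bounded {U V : normedModType R} (L : U -> V) :
  (forall a u, L (a *: u) = a *: L u) -> (exists K, bounded_by L K) ->
  bounded_by L (opn L).
Proof.
move=> LZ [K LK] u.
have ub : has_ubound [set `|L u| | u in [set u : U | `|u| <= 1]].
  exists `|K| => _ [v /= v_le1 <-]; apply: le_trans (LK v) _.
  apply: le_trans (ler_norm _) _.
  by rewrite normrM normr_id -[leRHS]mulr1 ler_wpM2l.
have [->|u0] := eqVneq u 0.
  have -> : L 0 = 0 by rewrite -(scale0r (0 : U)) LZ scale0r.
  by rewrite !normr0 mulr0.
have nu : 0 < `|u| by rewrite normr_gt0.
have -> : L u = `|u| *: L (`|u|^-1 *: u) by rewrite -LZ scalerA mulfV ?gt_eqF ?scale1r.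
rewrite normrZ normr_id mulrC ler_wpM2r //.
by apply: ub_le_sup ub _ _; exists (`|u|^-1 *: u) => //; exact: normalize_le1.
Qed.

Lemma opn2_bounded {U V : normedModType R} (B : U -> U -> V) :
  (forall a h u, B (a *: h) u = a *: B h u) ->
  (forall a h u, B h (a *: u) = a *: B h u) ->
  (exists K, bounded_by2 B K) -> bounded_by2 B (opn2 B).
Proof.
move=> BZl BZr [K BK] h u.
have ub : has_ubound [set `|B hu.1 hu.2| | hu in
              [set hu : U * U | `|hu.1| <= 1 /\ `|hu.2| <= 1]].
  exists `|K| => _ [[v w] /= [v_le1 w_le1] <-]; apply: le_trans (BK v w) _.
  apply: le_trans (ler_norm _) _.
  rewrite !normrM !normr_id -mulrA -[leRHS]mulr1 ler_wpM2l //.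
  by rewrite -[leRHS]mulr1 ler_pM.
have [->|h0] := eqVneq h 0.
  have -> : B 0 u = 0 by rewrite -(scale0r (0 : U)) BZl scale0r.
  by rewrite !normr0 mulr0 mul0r.
have [->|u0] := eqVneq u 0.
  have -> : B h 0 = 0 by rewrite -(scale0r (0 : U)) BZr scale0r.
  by rewrite !normr0 !mulr0.
have nh : 0 < `|h| by rewrite normr_gt0.
have nu : 0 < `|u| by rewrite normr_gt0.
have -> : B h u = (`|h| * `|u|) *: B (`|h|^-1 *: h) (`|u|^-1 *: u).
  by rewrite BZl BZr !scalerA mulrACA !mulfV ?gt_eqF // mulr1 scale1r.
rewrite normrZ normrM !normr_id mulrC -mulrA ler_wpM2r ?mulr_ge0 //.
apply: ub_le_sup ub _ _; exists (`|h|^-1 *: h, `|u|^-1 *: u) => //.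
by split; exact: normalize_le1.
Qed.

Lemma bounded_by_continuous {U V : normedModType R} (L : {linear U -> V}) K :
  bounded_by L K -> continuous L.
Proof.
move=> LK; apply: bounded_linear_continuous; apply/linear_boundedP.
near=> k => u; apply: le_trans (LK u) _; apply: ler_wpM2r; first done.
by near: k; apply: nbhs_pinfty_ge; rewrite num_real.
Unshelve. all: by end_near. Qed.

End OperatorNorm.

Section MeanValue.
Context {R : realType}.

Lemma diff_approx {U V : normedModType R} {f : U -> V} {x : U} : differentiable f x ->
  forall e, 0 < e -> \forall h \near 0, `|f (x + h) - f x - 'd f x h| <= e * `|h|.
Proof.
move=> /diff_locally /eqaddoP fo e e0; apply: filterS (fo e e0) => h /=.
by rewrite !fctE /= [h + x]addrC opprD addrA.
Qed.

Lemma diff_of_approx {U V : normedModType R} (f : U -> V) (L : {linear U -> V}) x :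
  continuous L ->
  (forall e, 0 < e -> \forall h \near 0, `|f (x + h) - f x - L h| <= e * `|h|) ->
  differentiable f x /\ 'd f x = L :> (U -> V).
Proof.
move=> cL fL.
have fxo : f \o shift x = cst (f x) + L +o_ 0 id.
  apply/(@eqaddoP R) => e e0; apply: filterS (fL e e0) => h /=.
  by rewrite !fctE /= [h + x]addrC opprD addrA.
have dfL := diff_unique cL fxo.
split => //; apply/diff_locallyxP; rewrite dfL; split => // h.
rewrite littleoE; first by rewrite /= [RHS]addrC subrK.
by move=> e e0; apply: filterS (fL e e0) => k /=; rewrite [k + x]addrC opprD addrA.
Qed.

Section ContinuousInduction.
Context {W : normedModType R} (phi : R -> W) (k : R).
Hypothesis phi_lip : forall t, 0 <= t <= 1 -> exists2 d, 0 < d &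
  forall s, `|s - t| < d -> `|phi s - phi t| <= k * `|s - t|.

(* Continuous induction: the supremum of the initial segments of [0, 1] on
   which the bound holds is attained, and it is 1. *)
Let bounded_at t := `|phi t - phi 0| <= k * t.
Let A := [set t : R | 0 <= t <= 1 /\ forall s, 0 <= s <= t -> bounded_at s].

Let bounded_at_step a b : bounded_at a ->
  `|phi b - phi a| <= k * (b - a) -> bounded_at b.
Proof.
move=> ba bab; apply: le_trans (ler_distD (phi a) _ _) _.
by rewrite -[k * b](subrK (k * a)) -mulrBr lerD.
Qed.

Let A_ub : has_ubound A. Proof. by exists 1 => t [/andP[_ ?] _]. Qed.

Let A0 : A 0.
Proof.
split => [|s /andP[s0 s_le0]]; first by rewrite lexx ler01.
have -> : s = 0 by apply/le_anti; rewrite s0 s_le0.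
by rewrite /bounded_at subrr normr0 mulr0.
Qed.

Let supA01 : 0 <= sup A <= 1.
Proof.
by rewrite (ub_le_sup A_ub A0) /=; apply: ge_sup; [exists 0|move=> t [/andP[]]].
Qed.

Let bounded_below_supA s : 0 <= s < sup A -> bounded_at s.
Proof.
move=> /andP[s0 sm]; have ms : 0 < sup A - s by rewrite subr_gt0.
have [t [_ At] mt] := sup_adherent ms (conj (ex_intro _ 0 A0) A_ub).
by apply: At; rewrite s0 /=; lra.
Qed.

Let A_supA : A (sup A).
Proof.
split=> // s /andP[s0 sm]; have [/(conj s0)/andP|ms] := ltP s (sup A).
  exact: bounded_below_supA.
have {ms sm s0} -> : s = sup A by apply/le_anti; rewrite sm ms.
have [->|m_neq0] := eqVneq (sup A) 0; first by rewrite /bounded_at subrr normr0 mulr0.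
have [d d0 dm] := phi_lip _ supA01.
pose s' := sup A - Num.min d (sup A) / 2.
have mu0 : 0 < Num.min d (sup A) by rewrite lt_min d0 lt_def m_neq0; case/andP: supA01.
have [mu_d mu_m] : Num.min d (sup A) <= d /\ Num.min d (sup A) <= sup A.
  by rewrite !ge_min !lexx orbT.
apply: (@bounded_at_step s'); first by apply: bounded_below_supA; rewrite /s'; lra.
have s'_dist : `|s' - sup A| = sup A - s'.
  by rewrite distrC gtr0_norm // subr_gt0 /s'; lra.
by rewrite distrC -s'_dist dm // s'_dist /s'; lra.
Qed.

Let supA_eq1 : sup A = 1.
Proof.
case/andP: supA01 => m0; rewrite le_eqVlt => /orP[/eqP //|m_lt1].
have [d d0 dm] := phi_lip _ supA01.
pose t := sup A + Num.min d (1 - sup A) / 2.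
have mu0 : 0 < Num.min d (1 - sup A) by rewrite lt_min d0 subr_gt0.
have [mu_d mu_m] : Num.min d (1 - sup A) <= d /\ Num.min d (1 - sup A) <= 1 - sup A.
  by rewrite !ge_min !lexx orbT.
suff /(ub_le_sup A_ub) : A t by rewrite /t; lra.
split=> [|s /andP[s0 st]]; first by rewrite /t; lra.
have [sm|ms] := leP s (sup A); first by apply: A_supA.2; rewrite s0.
apply: (@bounded_at_step (sup A)); first by apply: A_supA.2; rewrite m0 lexx.
have s_dist : `|s - sup A| = s - sup A by rewrite gtr0_norm // subr_gt0.
by rewrite -s_dist dm // s_dist; rewrite /t in st; lra.
Qed.

Lemma lipschitz01_of_pointwise : `|phi 1 - phi 0| <= k.
Proof.
by have := A_supA.2 1; rewrite supA_eq1 /bounded_at mulr1; apply; rewrite ler01 lexx.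
Qed.

End ContinuousInduction.

Lemma lipschitz_of_pointwise {U V : normedModType R} (f : U -> V) c :
  (forall x e, 0 < e -> exists2 d, 0 < d &
     forall h, `|h| < d -> `|f (x + h) - f x| <= (c + e) * `|h|) ->
  forall a b, `|f b - f a| <= c * `|b - a|.
Proof.
move=> f_lip a b; have [->|ba] := eqVneq b a; first by rewrite !subrr !normr0 mulr0.
have nba : 0 < `|b - a| by rewrite normr_gt0 subr_eq0.
apply/ler_addgt0Pr => e e0.
pose phi t := f (a + t *: (b - a)).
have -> : f b = phi 1 by rewrite /phi scale1r addrC subrK.
have -> : f a = phi 0 by rewrite /phi scale0r addr0.
apply: lipschitz01_of_pointwise => t _.
have [d d0 fd] := f_lip (a + t *: (b - a)) (e / `|b - a|) (divr_gt0 e0 nba).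
exists (d / `|b - a|) => [|s st]; first by rewrite divr_gt0.
have -> : phi s = f ((a + t *: (b - a)) + (s - t) *: (b - a)).
  by rewrite /phi scalerBl [s *: (b - a) - _]addrC addrA addrK.
apply: le_trans (fd _ _) _; first by rewrite normrZ -ltr_pdivlMr.
by rewrite normrZ le_eqVlt; apply/orP; left; apply/eqP; field; rewrite gt_eqF.
Qed.

Lemma mean_value_ineq {U V : normedModType R} (f : U -> V) M :
  (forall x, differentiable f x) -> (forall x, bounded_by ('d f x) M) ->
  forall a b, `|f b - f a| <= M * `|b - a|.
Proof.
move=> df dfM; apply: lipschitz_of_pointwise => x e e0.
have /nbhs_norm0P [d d0 fd] := diff_approx (df x) _ e0.
exists d => // h /fd /= fh; rewrite -[f (x + h) - f x](subrK ('d f x h)).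
apply: le_trans (ler_normD _ _) _; rewrite mulrDl addrC.
exact: lerD (dfM x h) fh.
Qed.

End MeanValue.

Section C2b.
Context {R : realType}.

Lemma diff_bounded_opn {U V : normedModType R} {f : U -> V} {x : U} :
  differentiable f x -> bounded_by ('d f x) (opn (D1 f x)).
Proof.
move=> /diff_continuous /linear_lipschitz [k _ dfk].
by apply: opn_bounded => [a u|]; [rewrite /D1 linearZ | exists k].
Qed.

Lemma nD_ge0 {U V : normedModType R} (f : U -> V) : 0 <= nD f.
Proof.
by apply: sup_ge0; [exists (opn (D1 f 0)), 0 | move=> _ [y _ <-]; exact: opn_ge0].
Qed.

Lemma nD2_ge0 {U V : normedModType R} (f : U -> V) : 0 <= nD2 f.
Proof.
by apply: sup_ge0; [exists (opn2 (D2 f 0)), 0 | move=> _ [y _ <-]; exact: opn2_ge0].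
Qed.

Lemma supn_le_n1 {U V : normedModType R} (f : U -> V) : supn f <= n1 f.
Proof. by rewrite /n1 le_max lexx. Qed.

Lemma nD_le_n1 {U V : normedModType R} (f : U -> V) : nD f <= n1 f.
Proof. by rewrite /n1 le_max lexx orbT. Qed.

Lemma n1_ge0 {U V : normedModType R} (f : U -> V) : 0 <= n1 f.
Proof. exact: le_trans (nD_ge0 f) (nD_le_n1 f). Qed.

Lemma diff_partial_of_bilinear {U V : normedModType R} {f : U -> V} {x : U}
    {B : U -> U -> V} {M : R} :
  (forall y, differentiable f y) ->
  (forall a k1 k2 u, B (a *: k1 + k2) u = a *: B k1 u + B k2 u) ->
  (forall a k u, B k (a *: u) = a *: B k u) ->
  (forall k u, `|B k u| <= M * `|k| * `|u|) ->
  (forall e, 0 < e -> \forall k \near 0,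
     opn (fun u => D1 f (x + k) u - D1 f x u - B k u) <= e * `|k|) ->
  forall w, differentiable (fun y => 'd f y w) x /\
    'd (fun y => 'd f y w) x = (fun k => B k w) :> (U -> V).
Proof.
move=> df Bl BZr BM Bo w.
have Bw_lin : linear (fun k => B k w) by move=> a k1 k2; rewrite Bl.
suff : differentiable (fun y => 'd f y w) x /\
    'd (fun y => 'd f y w) x = linear_of _ Bw_lin :> (U -> V) by [].
apply: diff_of_approx.
  by apply: (@bounded_by_continuous _ _ _ _ (M * `|w|)) => k; rewrite mulrAC; exact: BM.
move=> e e0; have w1 : 0 < `|w| + 1 by rewrite ltr_pwDr.
apply: filterS (Bo _ (divr_gt0 e0 w1)) => k Bk /=.
pose T u := D1 f (x + k) u - D1 f x u - B k u.
have T_bounded : bounded_by T (opn T).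
  apply: opn_bounded => [a u|].
    by rewrite /T /D1 !linearZZ BZr !scalerDr !scalerN.
  exists (opn (D1 f (x + k)) + opn (D1 f x) + M * `|k|) => u.
  apply: le_trans (ler_normB _ _) _; rewrite !mulrDl; apply: lerD; last exact: BM.
  by apply: le_trans (ler_normB _ _) _; apply: lerD; exact: diff_bounded_opn.
apply: le_trans (T_bounded w) _; apply: le_trans (ler_wpM2r (normr_ge0 w) Bk) _.
rewrite mulrAC ler_wpM2r // mulrAC ler_pdivrMr // ler_wpM2l ?ltW //.
by rewrite ltrDl.
Unshelve. all: by end_near.
Qed.

Section C2bFacts.
Context {U V : normedModType R} {f : U -> V} (f_C2b : C2b f).

Lemma C2b_diff x : differentiable f x.
Proof. by case: f_C2b. Qed.

Lemma C2b_le_supn x : `|f x| <= supn f.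
Proof. by case: f_C2b => _ _ _ _ [ub _ _]; apply: ub_le_sup ub _ _; exists x. Qed.

Lemma C2b_diff_bounded x : bounded_by ('d f x) (nD f).
Proof.
case: f_C2b => _ _ _ _ [_ ub _] u.
apply: le_trans (diff_bounded_opn (C2b_diff x) u) _.
by rewrite ler_wpM2r //; apply: ub_le_sup ub _ _; exists x.
Qed.

Lemma C2b_lipschitz a b : `|f b - f a| <= nD f * `|b - a|.
Proof. exact: mean_value_ineq C2b_diff C2b_diff_bounded a b. Qed.

Lemma C2b_diff2 x : (forall w, differentiable (fun y => 'd f y w) x) /\
   bounded_by2 (D2 f x) (nD2 f).
Proof.
case: f_C2b => df _ d2f _ [_ _ ub2].
have [B [Bl Br [M BM] Bo]] := d2f x.
have BZr a k u : B k (a *: u) = a *: B k u.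
  have B0 : B k 0 = 0 by have := Br (-1) k 0 0; rewrite scaler0 addr0 scaleN1r addNr.
  by rewrite -[a *: u]addr0 Br B0 addr0.
have BZl a k u : B (a *: k) u = a *: B k u.
  have B0 : B 0 u = 0 by have := Bl (-1) 0 0 u; rewrite scaler0 addr0 scaleN1r addNr.
  by rewrite -[a *: k]addr0 Bl B0 addr0.
have dB := diff_partial_of_bilinear df Bl BZr BM Bo.
have D2E k w : D2 f x k w = B k w by rewrite /D2 (dB w).2.
split=> [w|k w]; first exact: (dB w).1.
apply: le_trans (@opn2_bounded _ _ _ (D2 f x) _ _ _ k w) _.
- by move=> a k' u; rewrite !D2E BZl.
- by move=> a k' u; rewrite !D2E BZr.
- by exists M => k' u; rewrite D2E.
- rewrite -!mulrA ler_wpM2r ?mulr_ge0 //.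
  by apply: ub_le_sup ub2 _ _; exists x.
Qed.

Lemma C2b_diff_lipschitz a b w : `|'d f b w - 'd f a w| <= nD2 f * `|b - a| * `|w|.
Proof.
rewrite mulrAC; apply: (mean_value_ineq (fun y => 'd f y w)) => [y|y k].
  exact: (C2b_diff2 y).1.
by have := (C2b_diff2 y).2 k w; rewrite /D2 mulrAC.
Qed.

End C2bFacts.

Section C2bDifference.
Context {U V : normedModType R} {f1 f2 : U -> V} (f1_C2b : C2b f1) (f2_C2b : C2b f2).

Lemma C2b_distB_le_supn y : `|f1 y - f2 y| <= supn (f1 \- f2).
Proof.
apply: ub_le_sup; last by exists y.
exists (supn f1 + supn f2) => _ [z _ <-] /=.
by apply: le_trans (ler_normB _ _) _; rewrite lerD ?C2b_le_supn.
Qed.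

Lemma C2b_diffB y w : 'd (f1 \- f2) y w = 'd f1 y w - 'd f2 y w.
Proof. by rewrite (diffB (C2b_diff f1_C2b y) (C2b_diff f2_C2b y)). Qed.

Lemma C2b_diffB_le_n1 y w : `|'d f1 y w - 'd f2 y w| <= n1 (f1 \- f2) * `|w|.
Proof.
have ub : has_ubound (range (fun x => opn (D1 (f1 \- f2) x))).
  exists (nD f1 + nD f2) => _ [z _ <-] /=.
  apply: opn_le => [|u]; first by rewrite addr_ge0 ?nD_ge0.
  rewrite /D1 C2b_diffB mulrDl (le_trans (ler_normB _ _)) //.
  by rewrite lerD ?C2b_diff_bounded.
rewrite -C2b_diffB; apply: le_trans (diff_bounded_opn _ w) _.
  by apply: differentiableB; exact: C2b_diff.
rewrite ler_wpM2r // (le_trans _ (nD_le_n1 _)) //.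
by apply: ub_le_sup ub _ _; exists y.
Qed.

End C2bDifference.
End C2b.

Lemma subrACA {V : zmodType} (a b c d : V) : (a - b) - (c - d) = (a - c) - (b - d).
Proof. by rewrite !opprB addrACA [RHS]addrACA [- c + _]addrC. Qed.

Definition Linv {R : realType} (a Lr : R) := a / (1 - a * Lr).

Definition dAr {R : realType} {Xc : normedModType R} (A r : Xc -> Xc) (y u : Xc) :=
  A u + 'd r y u.

Section InverseMap.
Context {R : realType} {Xc : completeNormedModType R} {A : {linear Xc -> Xc}}
  {Ainv : Xc -> Xc} {a Lr : R} {r g : Xc -> Xc}.
Hypotheses (AK : cancel A Ainv) (KA : cancel Ainv A)
  (Ainv_bounded : bounded_by Ainv a) (a_ge0 : 0 <= a) (aLr_lt1 : a * Lr < 1)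
  (r_C2b : C2b r) (nDr_le : nD r <= Lr) (gK : cancel g (fun x => A x + r x)).

Let Lr_ge0 : 0 <= Lr := le_trans (nD_ge0 r) nDr_le.
Local Notation Linv := (Linv a Lr).
Local Notation dAr := (dAr A r).

Lemma Linv_ge0 : 0 <= Linv.
Proof. by rewrite divr_ge0 // subr_ge0 ltW. Qed.

Lemma absorb_Linv (P Q : R) : P <= a * (Q + Lr * P) -> P <= Linv * Q.
Proof.
move=> PQ; rewrite /Linv mulrAC ler_pdivlMr ?subr_gt0 //.
by rewrite mulrBr mulr1 lerBlDr (le_trans PQ) // mulrDr [P * _]mulrC mulrA.
Qed.

Lemma Ainv_normB u v : `|u - v| <= a * `|A u - A v|.
Proof. by rewrite -linearB /= -{1}[u - v]AK; exact: Ainv_bounded. Qed.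

Lemma dr_bounded y : bounded_by ('d r y) Lr.
Proof. by move=> u; rewrite (le_trans (C2b_diff_bounded r_C2b y u)) ?ler_wpM2r. Qed.

Lemma r_lipschitz p q : `|r p - r q| <= Lr * `|p - q|.
Proof. by rewrite (le_trans (C2b_lipschitz r_C2b q p)) ?ler_wpM2r. Qed.

Lemma A_gE x : A (g x) = x - r (g x).
Proof. by rewrite -{2}[x]gK addrK. Qed.

Lemma inv_lipschitz x y : `|g x - g y| <= Linv * `|x - y|.
Proof.
apply: absorb_Linv; apply: le_trans (Ainv_normB _ _) _; rewrite ler_wpM2l //.
by rewrite !A_gE subrACA (le_trans (ler_normB _ _)) // lerD ?r_lipschitz.
Qed.

Section Linearization.
Variable y : Xc.
Local Notation dAr := (dAr y).

Lemma dAr_linear : linear dAr.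
Proof. by move=> c u v; rewrite /dAr !linearP /= scalerDr addrACA. Qed.

Lemma dAr_lower u : `|u| <= Linv * `|dAr u|.
Proof.
apply: absorb_Linv; rewrite -{1}[u]AK; apply: le_trans (Ainv_bounded _) _.
have -> : A u = dAr u - 'd r y u by rewrite addrK.
by rewrite ler_wpM2l // (le_trans (ler_normB _ _)) // lerD ?dr_bounded.
Qed.

Lemma dAr_surj z : exists u, dAr u = z.
Proof.
pose F u := Ainv (z - 'd r y u).
have F_contraction : is_contraction (totalfun_ setT F : {fun setT >-> setT}).
  exists (NngNum (mulr_ge0 a_ge0 Lr_ge0)); split => //= -[u v] _ /=.
  apply: le_trans (Ainv_normB _ _) _; rewrite /F !KA -mulrA ler_wpM2l //.
  by rewrite subrACA subrr sub0r normrN -linearB /= dr_bounded.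
have [u _ uF] := banach_fixed_point F_contraction closedT (ex_intro _ 0 I).
by exists u; rewrite /dAr {1}uF /F KA subrK.
Qed.

Lemma dAr_inverse : exists S : Xc -> Xc,
  [/\ linear S, bounded_by S Linv, cancel S dAr & cancel dAr S].
Proof.
have [S SK] := choice dAr_surj.
have dAr_inj : injective dAr.
  move=> u v uv; apply/eqP; rewrite -subr_eq0 -normr_eq0 eq_le normr_ge0 andbT.
  apply: le_trans (dAr_lower (u - v)) _.
  by rewrite /dAr !linearB /= addrACA -opprD -/(dAr u) -/(dAr v) uv subrr normr0 mulr0.
exists S; split => // [c z w|z|u]; last exact: dAr_inj.
- by apply: dAr_inj; rewrite dAr_linear !SK.
- by apply: le_trans (dAr_lower (S z)) _; rewrite SK.
Qed.

End Linearization.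

Lemma inv_remainder x (S : Xc -> Xc) : linear S -> bounded_by S Linv ->
  cancel (dAr (g x)) S ->
  forall e, 0 < e -> \forall h \near 0, `|g (x + h) - g x - S h| <= e * `|h|.
Proof.
move=> S_lin S_bounded dArK e e0; set y := g x.
have L2_gt0 : 0 < Linv * Linv + 1 by rewrite ltr_pwDr // mulr_ge0 // Linv_ge0.
have L1_gt0 : 0 < Linv + 1 by rewrite ltr_pwDr // Linv_ge0.
have /nbhs_norm0P [d d0 r_approx] :=
  diff_approx (C2b_diff r_C2b y) _ (divr_gt0 e0 L2_gt0).
apply/nbhs_norm0P; exists (d / (Linv + 1)); first exact: divr_gt0.
move=> h /= hd; set k := g (x + h) - y.
have hk : `|k| <= Linv * `|h|.
  by rewrite (le_trans (inv_lipschitz _ _)) // [x + h]addrC addrK.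
have kd : `|k| < d.
  apply: le_lt_trans hk _; apply: le_lt_trans (_ : _ <= (Linv + 1) * `|h|) _.
    by rewrite ler_wpM2r // lerDl.
  by rewrite mulrC -ltr_pdivlMr.
set rho := r (y + k) - r y - 'd r y k.
have hE : h = dAr y k + rho.
  have Ak : A k = h - (r (y + k) - r y).
    by rewrite /k linearB /= !A_gE -/y subrKC subrACA [x + h]addrC addrK.
  by rewrite /dAr -addrA subrKC Ak subrK.
have SD u v : S (u + v) = S u + S v by rewrite -[u]scale1r S_lin !scale1r.
(* As [S] inverts [dAr y], the error term is [- S rho]. *)
rewrite {1}hE SD dArK opprD addNKr normrN.
apply: le_trans (S_bounded rho) _.
apply: le_trans (ler_wpM2l Linv_ge0 (r_approx k kd)) _.
apply: le_trans (ler_wpM2l Linv_ge0 (ler_wpM2l (ltW (divr_gt0 e0 L2_gt0)) hk)) _.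
have -> : Linv * (e / (Linv * Linv + 1) * (Linv * `|h|)) =
          (e * `|h|) * (Linv * Linv / (Linv * Linv + 1)) by field; rewrite gt_eqF.
apply: ler_piMr; first exact: mulr_ge0 (ltW e0) (normr_ge0 h).
by rewrite ler_pdivrMr // mul1r lerDl.
Qed.

Lemma inv_diff x : differentiable g x /\
  [/\ bounded_by ('d g x) Linv, cancel ('d g x) (dAr (g x))
    & cancel (dAr (g x)) ('d g x)].
Proof.
have [S [S_lin S_bounded SK dArK]] := dAr_inverse (g x).
suff [dg ->] : differentiable g x /\ 'd g x = linear_of _ S_lin :> (Xc -> Xc) by [].
apply: diff_of_approx; first exact: (@bounded_by_continuous _ _ _ _ Linv).
exact: inv_remainder.
Qed.

Section Perturbation.
Context {rt g2 : Xc -> Xc}.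
Hypotheses (rt_C2b : C2b rt) (g2K : cancel g2 (fun x => A x + rt x)).

Lemma inv_dist x : `|g x - g2 x| <= Linv * supn (r \- rt).
Proof.
have A_g2E : A (g2 x) = x - rt (g2 x) by rewrite -{2}[x]g2K addrK.
apply: (@le_trans _ _ (Linv * `|rt (g2 x) - r (g2 x)|)).
  apply: absorb_Linv; apply: le_trans (Ainv_normB _ _) _; rewrite ler_wpM2l //.
  rewrite A_gE A_g2E subrACA subrr sub0r normrN.
  apply: le_trans (ler_distD (r (g2 x)) _ _) _.
  by rewrite addrC lerD ?r_lipschitz // distrC.
by rewrite ler_wpM2l ?Linv_ge0 // distrC; exact: C2b_distB_le_supn.
Qed.

End Perturbation.
End InverseMap.

Lemma diff_comp3 {R : realType} {X1 X2 X3 X4 : normedModType R}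
  {h : X3 -> X4} {f : X2 -> X3} {g : X1 -> X2} {x : X1} (u : X1) :
  differentiable g x -> differentiable f (g x) -> differentiable h (f (g x)) ->
  'd (h \o f \o g) x u = 'd h (f (g x)) ('d f (g x) ('d g x u)).
Proof.
move=> dg df dh; rewrite diff_comp //; last exact: differentiable_comp.
by rewrite /= diff_comp.
Qed.

Section CompositeDifference.
Context {R : realType} {U W Z : normedModType R} {h : W -> Z} {f1 f2 : U -> W}.
Hypotheses (h_C2b : C2b h) (f1_C2b : C2b f1) (f2_C2b : C2b f2).

Lemma diff_comp_dist y1 y2 v1 v2 :
  `|'d h (f1 y1) ('d f1 y1 v1) - 'd h (f2 y2) ('d f2 y2 v2)| <=
    nD h * (nD f1 * `|v1 - v2|) + nD h * (n1 (f1 \- f2) * `|v2|)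
    + nD2 h * n1 (f1 \- f2) * (nD f2 * `|v2|)
    + nD h * (nD2 f2 * `|y1 - y2| * `|v2|)
    + nD2 h * (nD f2 * `|y1 - y2|) * (nD f2 * `|v2|).
Proof.
have Dh_bounded := C2b_diff_bounded h_C2b.
apply: le_trans (ler_distD ('d h (f2 y1) ('d f2 y2 v2)) _ _) _; apply: lerD.
  apply: le_trans (ler_distD ('d h (f2 y1) ('d f2 y1 v2)) _ _) _; apply: lerD.
    apply: le_trans (ler_distD ('d h (f1 y1) ('d f2 y1 v2)) _ _) _; apply: lerD.
      apply: le_trans (ler_distD ('d h (f1 y1) ('d f1 y1 v2)) _ _) _; apply: lerD.
        rewrite -linearB /=; apply: le_trans (Dh_bounded _ _) _.
        by rewrite ler_wpM2l ?nD_ge0 // -linearB C2b_diff_bounded.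
      rewrite -linearB /=; apply: le_trans (Dh_bounded _ _) _.
      by rewrite ler_wpM2l ?nD_ge0 // C2b_diffB_le_n1.
    apply: le_trans (C2b_diff_lipschitz h_C2b _ _ _) _.
    rewrite ler_pM ?mulr_ge0 ?nD2_ge0 //; last exact: C2b_diff_bounded.
    rewrite ler_wpM2l ?nD2_ge0 //.
    exact: le_trans (C2b_distB_le_supn f1_C2b f2_C2b y1) (supn_le_n1 _).
  rewrite -linearB /=; apply: le_trans (Dh_bounded _ _) _.
  by rewrite ler_wpM2l ?nD_ge0 // C2b_diff_lipschitz.
apply: le_trans (C2b_diff_lipschitz h_C2b _ _ _) _.
rewrite ler_pM ?mulr_ge0 ?nD2_ge0 ?nD_ge0 //; last exact: C2b_diff_bounded.
by rewrite ler_wpM2l ?nD2_ge0 // C2b_lipschitz.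
Qed.

End CompositeDifference.

Section InverseComposite.
Context {R : realType} {Xc : completeNormedModType R} {X Y : normedModType R}
  {A : {linear Xc -> Xc}} {Ainv : Xc -> Xc} {a Lr : R} {r rt g1 g2 : Xc -> Xc}
  {h : Y -> X} {f1 f2 : Xc -> Y}.
Hypotheses (AK : cancel A Ainv) (KA : cancel Ainv A)
  (Ainv_bounded : bounded_by Ainv a) (a_ge0 : 0 <= a) (aLr_lt1 : a * Lr < 1)
  (r_C2b : C2b r) (rt_C2b : C2b rt) (nDr_le : nD r <= Lr) (nDrt_le : nD rt <= Lr)
  (g1K : cancel g1 (fun x => A x + r x)) (g2K : cancel g2 (fun x => A x + rt x))
  (h_C2b : C2b h) (f1_C2b : C2b f1) (f2_C2b : C2b f2).
Local Notation L := (Linv a Lr).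

Let L_ge0 : 0 <= L := Linv_ge0 a_ge0 aLr_lt1.

Let g1_diff := inv_diff AK KA Ainv_bounded a_ge0 aLr_lt1 r_C2b nDr_le g1K.
Let g2_diff := inv_diff AK KA Ainv_bounded a_ge0 aLr_lt1 rt_C2b nDrt_le g2K.
Let g_supn_dist :=
  inv_dist AK Ainv_bounded a_ge0 aLr_lt1 r_C2b nDr_le g1K rt_C2b g2K.

Let g_dist x : `|g1 x - g2 x| <= L * n1 (r \- rt).
Proof. by apply: le_trans (g_supn_dist x) _; rewrite ler_wpM2l // supn_le_n1. Qed.

Lemma comp_inv_supn_le :
  supn ((h \o f1 \o g1) \- (h \o f2 \o g2))
    <= nD h * (supn (f1 \- f2) + L * nD f2 * supn (r \- rt)).
Proof.
apply: ge_sup; first by exists `|((h \o f1 \o g1) \- (h \o f2 \o g2)) 0|, 0.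
move=> _ [x _ <-] /=; apply: le_trans (C2b_lipschitz h_C2b _ _) _.
rewrite ler_wpM2l ?nD_ge0 //.
apply: le_trans (ler_distD (f2 (g1 x)) _ _) _; apply: lerD.
  exact: C2b_distB_le_supn.
apply: le_trans (C2b_lipschitz f2_C2b _ _) _.
by rewrite [L * _]mulrC -mulrA ler_wpM2l ?nD_ge0.
Qed.

Lemma diff_inv_dist {delta} : nD2 rt <= delta -> forall x u,
  `|'d g1 x u - 'd g2 x u| <= L ^+ 2 * (1 + L * delta) * n1 (r \- rt) * `|u|.
Proof.
move=> nD2rt_le x u.
have [_ [dg1_bounded dg1K _]] := g1_diff x.
have [_ [dg2_bounded _ dAr2K]] := g2_diff x.
set v1 := 'd g1 x u.
have -> : v1 - 'd g2 x u =
           'd g2 x (dAr A rt (g2 x) v1) - 'd g2 x (dAr A r (g1 x) v1).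
  by rewrite dAr2K /v1 dg1K.
rewrite -linearB /dAr opprD addrACA subrr add0r.
apply: le_trans (dg2_bounded _) _.
suff -> : L ^+ 2 * (1 + L * delta) * n1 (r \- rt) * `|u| =
          L * (delta * (L * n1 (r \- rt)) * (L * `|u|) + n1 (r \- rt) * (L * `|u|)).
  rewrite ler_wpM2l //; apply: le_trans (ler_distD ('d rt (g1 x) v1) _ _) _.
  apply: lerD.
    apply: le_trans (C2b_diff_lipschitz rt_C2b _ _ _) _.
    rewrite ler_pM ?mulr_ge0 ?nD2_ge0 //; last exact: dg1_bounded.
    by apply: ler_pM; rewrite ?nD2_ge0 // distrC; exact: g_dist.
  rewrite distrC; apply: le_trans (C2b_diffB_le_n1 r_C2b rt_C2b _ _) _.
  by rewrite ler_wpM2l ?n1_ge0 //; exact: dg1_bounded.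
by ring.
Qed.

Local Notation diff_bound delta :=
  (L * (nD h + nD2 h * nD f2) * n1 (f1 \- f2)
   + L ^+ 2 * (nD2 h * nD f2 ^+ 2 + nD h * nD2 f2) * n1 (r \- rt)
   + L ^+ 2 * nD h * nD f1 * (1 + L * delta) * n1 (r \- rt)).

Lemma comp_inv_diff_dist {delta} : nD2 rt <= delta -> forall x u,
  `|'d (h \o f1 \o g1) x u - 'd (h \o f2 \o g2) x u| <= diff_bound delta * `|u|.
Proof.
move=> nD2rt_le x u.
have [dg1 _] := g1_diff x.
have [dg2 [dg2_bounded _ _]] := g2_diff x.
rewrite (diff_comp3 u dg1 (C2b_diff f1_C2b _) (C2b_diff h_C2b _)).
rewrite (diff_comp3 u dg2 (C2b_diff f2_C2b _) (C2b_diff h_C2b _)).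
apply: le_trans (diff_comp_dist h_C2b f1_C2b f2_C2b _ _ _ _) _.
have dg_dist := diff_inv_dist nD2rt_le x u.
have v2_le : `|'d g2 x u| <= L * `|u| := dg2_bounded u.
have y_le := g_dist x.
suff -> : diff_bound delta * `|u| =
  nD h * (nD f1 * (L ^+ 2 * (1 + L * delta) * n1 (r \- rt) * `|u|))
  + nD h * (n1 (f1 \- f2) * (L * `|u|))
  + nD2 h * n1 (f1 \- f2) * (nD f2 * (L * `|u|))
  + nD h * (nD2 f2 * (L * n1 (r \- rt)) * (L * `|u|))
  + nD2 h * (nD f2 * (L * n1 (r \- rt))) * (nD f2 * (L * `|u|)).
  repeat apply: lerD.
  - by rewrite ler_wpM2l ?nD_ge0 // ler_wpM2l ?nD_ge0.
  - by rewrite ler_wpM2l ?nD_ge0 // ler_wpM2l ?n1_ge0.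
  - by rewrite ler_wpM2l ?mulr_ge0 ?nD2_ge0 ?n1_ge0 // ler_wpM2l ?nD_ge0.
  - by rewrite ler_wpM2l ?nD_ge0 // ler_pM ?mulr_ge0 ?nD2_ge0 // ler_wpM2l ?nD2_ge0.
  - apply: ler_pM; rewrite ?mulr_ge0 ?nD2_ge0 ?nD_ge0 //.
      by rewrite ler_wpM2l ?nD2_ge0 // ler_wpM2l ?nD_ge0.
    by rewrite ler_wpM2l ?nD_ge0.
(* Generalizing the atoms first keeps [ring] from unfolding them. *)
by move: (nD h) (nD2 h) (nD f1) (nD f2) (nD2 f2) (n1 (f1 \- f2)) (n1 (r \- rt))
  (L) (delta) `|u| => *; ring.
Qed.

Lemma comp_inv_diff_le delta : nD2 rt <= delta ->
  sup (range (fun x => opn (fun u =>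
         D1 (h \o f1 \o g1) x u - D1 (h \o f2 \o g2) x u)))
  <= diff_bound delta.
Proof.
move=> nD2rt_le; have delta_ge0 : 0 <= delta := le_trans (nD2_ge0 rt) nD2rt_le.
apply: ge_sup; first by eexists; exists 0.
move=> _ [x _ <-]; apply: opn_le => [|u]; last exact: comp_inv_diff_dist.
by repeat first [exact: L_ge0 | exact: nD_ge0 | exact: nD2_ge0 | exact: n1_ge0
  | apply: addr_ge0 | apply: mulr_ge0 | apply: exprn_ge0].
Qed.

End InverseComposite.

Theorem lemma3p7 (R : realType) (Xc X Y : completeNormedModType R)
  (A : {linear Xc -> Xc}) (Ainv : Xc -> Xc)
  (Lg Lc : R)
  (r rt : Xc -> Xc) (g1 g2 : Xc -> Xc)
  (h : Y -> X) (f1 f2 : Xc -> Y) :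
  continuous A -> continuous Ainv ->
  cancel A Ainv -> cancel Ainv A ->
  0 <= Lg -> 0 <= Lc -> Lc < 1 ->
  let Lr := (Lg + Lc * (2 * opn A + Lg)) / (1 - Lc) in
  let Lt := opn Ainv ^+ 2 * Lr / (1 - opn Ainv * Lr) in
  let Lm1 := opn Ainv + Lt in
  Lr * opn Ainv < 1 ->
  C2b r -> C2b rt -> nD r <= Lr -> nD rt <= Lr ->
  (* g1 = (A + r)^{-1}, g2 = (A + rt)^{-1} *)
  cancel (fun x => A x + r x) g1 -> cancel g1 (fun x => A x + r x) ->
  cancel (fun x => A x + rt x) g2 -> cancel g2 (fun x => A x + rt x) ->
  C2b h -> C2b f1 -> C2b f2 ->
  let F1 := h \o f1 \o g1 in
  let F2 := h \o f2 \o g2 in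
  supn (F1 \- F2)
    <= nD h * (supn (f1 \- f2) + Lm1 * nD f2 * supn (r \- rt))
  /\
  (forall delta : R, 0 < delta -> nD2 rt <= delta ->
     sup (range (fun x => opn (fun u => D1 F1 x u - D1 F2 x u)))
     <= Lm1 * (nD h + nD2 h * nD f2) * n1 (f1 \- f2)
        + Lm1 ^+ 2 * (nD2 h * nD f2 ^+ 2 + nD h * nD2 f2) * n1 (r \- rt)
        + Lm1 ^+ 2 * nD h * nD f1 * (1 + Lm1 * delta) * n1 (r \- rt)).
Proof.
move=> _ Ainv_cont AK KA _ _ _ Lr Lt Lm1 Lr_lt r_C2b rt_C2b nDr_le nDrt_le.
move=> _ g1K _ g2K h_C2b f1_C2b f2_C2b F1 F2.
have Ainv_lin : linear Ainv := can2_linear AK KA.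
have Ainv_bounded : bounded_by Ainv (opn Ainv).
  apply: opn_bounded; first exact: can2_scalable AK KA.
  have [k _ Ainv_k] := linear_lipschitz (f := linear_of _ Ainv_lin) Ainv_cont.
  by exists k.
have aLr_lt1 : opn Ainv * Lr < 1 by rewrite mulrC.
have -> : Lm1 = Linv (opn Ainv) Lr.
  by rewrite /Lm1 /Lt /Linv; field; rewrite subr_eq0 eq_sym lt_eqF.
split; first exact: comp_inv_supn_le AK Ainv_bounded (opn_ge0 _) aLr_lt1 r_C2b
  rt_C2b nDr_le g1K g2K h_C2b f1_C2b f2_C2b.
by move=> delta _; exact: comp_inv_diff_le AK KA Ainv_bounded (opn_ge0 _) aLr_lt1
  r_C2b rt_C2b nDr_le nDrt_le g1K g2K h_C2b f1_C2b f2_C2b delta.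
Qed.
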